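(* Fix $k$, $\theta^{(k-1)}\in\mathbb{R}^d$, step sizes $h_k,h_{k-1}>0$, $\beta_k\ge0$, and $p^{(k-1)}\in\mathbb{R}^d$; set $\theta^{(k)}=\theta^{(k-1)}+h_{k-1}p^{(k-1)}$, $v^{(k)}=D(\theta^{(k)})$, $v^{(k-1)}=D(\theta^{(k-1)})$ and $z^{(k-1)}\in\mathbb{R}^d$ with entries $z^{(k-1)}_i=(\psi^{(k)}_i,v^{(k)}-v^{(k-1)})_X$. Define the natural Heavy-Ball momentum $$p^{(k)}=\beta_k\,G_X^{(k)\dagger}G_X^{(k,k-1)}p^{(k-1)}-h_k\,G^{(k)\dagger}\nabla L(\theta^{(k)})$$ and the functional-difference momentum $$\widehat{p^{(k)}}=\frac{\beta_k}{h_{k-1}}\,G_X^{(k)\dagger}z^{(k-1)}-h_k\,G^{(k)\dagger}\nabla L(\theta^{(k)}).$$ Then $$\big\|\psi^{(k)T}\widehat{p^{(k)}}-\psi^{(k)T}p^{(k)}\big\|_X\le\frac{h_{k-1}}{2}\,\beta_k\,\kappa_{\max}(\theta^{(k-1)})\,\|p^{(k-1)}\|_2^2+o\big(h_{k-1}\|p^{(k-1)}\|_2^2\big),$$ where the remainder is understood as $h_{k-1}\|p^{(k-1)}\|_2\to0$ with $\theta^{(k-1)}$ fixed.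
   Context: $D:\mathbb{R}^d\to H$ is a twice continuously Fréchet differentiable map into a space $H$ of functions equipped with an inner product $(\cdot,\cdot)_X$ and norm $\|\cdot\|_X$. Write $\psi(\theta)=(\psi_1(\theta),\dots,\psi_d(\theta))$ with $\psi_i(\theta)=\frac{\partial D}{\partial\theta_i}(\theta)$, and for $c\in\mathbb{R}^d$, $\psi(\theta)^Tc=\sum_i c_i\psi_i(\theta)$. Let $\psi^{(j)}=\psi(\theta^{(j)})$. $G_X^{(k)}$ is the $d\times d$ Gram matrix with entries $(\psi^{(k)}_i,\psi^{(k)}_j)_X$, $G_X^{(k,k-1)}$ the cross-Gram matrix with entries $(\psi^{(k)}_i,\psi^{(k-1)}_j)_X$, and $\dagger$ denotes the Moore–Penrose pseudo-inverse. $G^{(k)}$ is any symmetric positive semi-definite $d\times d$ matrix and $\nabla L(\theta^{(k)})\in\mathbb{R}^d$ the gradient of the parameter loss $L=\mathcal{L}\circ D$; these terms are the same in both momenta. $H_D(\theta):\mathbb{R}^d\times\mathbb{R}^d\to H$ denotes the second derivative of $D$ at $\theta$, and $\kappa_{\max}(\theta)=\max_{q\in\mathbb{R}^d,\|q\|_2=1}\|H_D(\theta)(q,q)\|_X$. *)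

From HB Require Import structures.
From mathcomp Require Import all_boot all_order all_algebra.
From mathcomp Require Import all_classical all_reals all_analysis.
Set Implicit Arguments. Unset Strict Implicit. Unset Printing Implicit Defensive.
Import Order.TTheory GRing.Theory Num.Theory.
Import numFieldNormedType.Exports.
Local Open Scope classical_set_scope.
Local Open Scope ring_scope.

(* Euclidean norm ||c||_2 on R^d (MathComp's default matrix norm is the sup norm). *)
Definition norm2 {R : realType} {d : nat} (c : 'cV[R]_d) : R :=
  Num.sqrt (\sum_(i < d) c i 0 ^+ 2).

Definition is_inner_product {R : realType} {V : normedModType R}
  (ip : V -> V -> R) : Prop :=
  (forall x y, ip x y = ip y x) /\
  (forall (a : R) (x y z : V), ip (a *: x + y) z = a * ip x z + ip y z) /\
  (forall x, ip x x = `|x| ^+ 2).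

Definition ebasis {R : realType} {d : nat} (i : 'I_d) : 'cV[R]_d := delta_mx i 0.

Definition psi {R : realType} {V : normedModType R} {d : nat}
  (D : 'cV[R]_d -> V) (th : 'cV[R]_d) (i : 'I_d) : V :=
  'd D th (ebasis i).

Definition psiT {R : realType} {V : normedModType R} {d : nat}
  (D : 'cV[R]_d -> V) (th : 'cV[R]_d) (c : 'cV[R]_d) : V :=
  \sum_(i < d) c i 0 *: psi D th i.

Definition GramX {R : realType} {V : normedModType R} {d : nat}
  (ip : V -> V -> R) (D : 'cV[R]_d -> V) (th : 'cV[R]_d) : 'M[R]_d :=
  \matrix_(i, j) ip (psi D th i) (psi D th j).

Definition crossGramX {R : realType} {V : normedModType R} {d : nat}
  (ip : V -> V -> R) (D : 'cV[R]_d -> V) (th th' : 'cV[R]_d) : 'M[R]_d :=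
  \matrix_(i, j) ip (psi D th i) (psi D th' j).

Definition is_MP_inverse {R : realType} {m n : nat}
  (A : 'M[R]_(m, n)) (X : 'M[R]_(n, m)) : Prop :=
  [/\ A *m X *m A = A, X *m A *m X = X,
      (A *m X)^T = A *m X & (X *m A)^T = X *m A].

Definition mpinv {R : realType} {m n : nat} (A : 'M[R]_(m, n)) : 'M[R]_(n, m) :=
  xget 0 [set X | is_MP_inverse A X].

Definition HD {R : realType} {V : normedModType R} {d : nat}
  (D : 'cV[R]_d -> V) (th q r : 'cV[R]_d) : V :=
  'd (fun y => 'd D y q) th r.

Definition C2 {R : realType} {V : normedModType R} {d : nat}
  (D : 'cV[R]_d -> V) : Prop :=
  (forall x, differentiable D x) /\
  (forall q x, differentiable (fun y => 'd D y q) x) /\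
  (forall q r, continuous (fun x => HD D x q r)).

(* kappa_max(theta) = max_{||q||_2 = 1} ||H_D(theta)(q,q)||_X
   (the max is attained; we write it as the supremum). *)
Definition kappa_max {R : realType} {V : normedModType R} {d : nat}
  (D : 'cV[R]_d -> V) (th : 'cV[R]_d) : R :=
  sup [set `|HD D th q q| | q in [set q : 'cV[R]_d | norm2 q = 1]].

Definition symPSD {R : realType} {d : nat} (G : 'M[R]_d) : Prop :=
  G^T = G /\ forall c : 'cV[R]_d, 0 <= (c^T *m G *m c) 0 0.

(* The two momenta share their gradient term, so psi^T phat - psi^T p equals
   beta psi^T G_X^+ w with w_i = (psi_i, y) and y = h^-1 (D th1 - D th0) - D'(th0) p.
   For any generalized inverse X of the Gram matrix (in particular G_X^+), the map
   y |-> psi^T X ((psi_i, y))_i is the orthogonal projection onto the span of the psi_i,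
   hence a contraction, so the gap is at most beta |y|.  Finally y is the error of a
   difference quotient: Taylor's formula with Peano remainder gives
   y = (h/2) H_D(th0)(p, p) + o(h |p|^2), and |H_D(th0)(p, p)| <= kappa_max(th0) |p|^2. *)

From HB Require Import structures.
From mathcomp Require Import all_boot all_order all_algebra.
From mathcomp Require Import all_classical all_reals all_analysis.
From mathcomp Require Import ring lra.
Import Order.TTheory GRing.Theory Num.Theory.
Import numFieldNormedType.Exports.
Local Open Scope classical_set_scope.
Local Open Scope ring_scope.
Set Implicit Arguments. Unset Strict Implicit.

Section InnerProduct.
Variables (R : realType) (V : normedModType R) (ip : V -> V -> R).
Hypothesis hip : is_inner_product ip.

Lemma ip_sym x y : ip x y = ip y x.
Proof. by case: hip. Qed.

Lemma ip_norm x : ip x x = `|x| ^+ 2.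
Proof. by case: hip => _ []. Qed.

Lemma ipDZl a x y z : ip (a *: x + y) z = a * ip x z + ip y z.
Proof. by case: hip => _ []. Qed.

Lemma ip0l z : ip 0 z = 0.
Proof. by have := ipDZl 1 0 0 z; rewrite scale1r addr0 mul1r; lra. Qed.

Lemma ipDl x y z : ip (x + y) z = ip x z + ip y z.
Proof. by rewrite -[x]scale1r ipDZl mul1r scale1r. Qed.

Lemma ipZl a x z : ip (a *: x) z = a * ip x z.
Proof. by rewrite -[a *: x]addr0 ipDZl ip0l addr0. Qed.

Lemma ipBl x y z : ip (x - y) z = ip x z - ip y z.
Proof. by rewrite addrC -scaleN1r ipDZl mulN1r addrC. Qed.

Lemma ipBr x y z : ip z (x - y) = ip z x - ip z y.
Proof. by rewrite ip_sym ipBl !(ip_sym z). Qed.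

Lemma ipZr a x z : ip z (a *: x) = a * ip z x.
Proof. by rewrite ip_sym ipZl ip_sym. Qed.

Lemma ip_suml n (c : 'I_n -> R) (v : 'I_n -> V) z :
  ip (\sum_i c i *: v i) z = \sum_i c i * ip (v i) z.
Proof. by elim/big_rec2: _ => [|i s w _ <-]; rewrite ?ip0l // ipDZl. Qed.

Lemma ip_sumr n (c : 'I_n -> R) (v : 'I_n -> V) z :
  ip z (\sum_i c i *: v i) = \sum_i c i * ip z (v i).
Proof. by rewrite ip_sym ip_suml; under eq_bigr do rewrite ip_sym. Qed.

(* Polarization: [4 (x, y) = |x + y|^2 - |x - y|^2]. *)
Lemma cauchy_schwarz x y : ip x y <= `|x| * `|y|.
Proof.
have polar : ip x y = (ip (x + y) (x + y) - ip (x - y) (x - y)) / 4.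
  by rewrite ipBl ipDl !ipBr !(ip_sym _ (x + y)) !ipDl (ip_sym y x); field.
rewrite polar !ip_norm.
have le_sum : `|x + y| ^+ 2 <= (`|x| + `|y|) ^+ 2.
  by rewrite lerXn2r ?nnegrE ?addr_ge0 ?ler_normD.
have le_diff : (`|y| - `|x|) ^+ 2 <= `|x - y| ^+ 2.
  by rewrite -real_normK ?num_real // lerXn2r ?nnegrE // distrC ler_dist_dist.
nra.
Qed.

Lemma normr_ip_le x y : `|ip x y| <= `|x| * `|y|.
Proof.
rewrite ler_norml cauchy_schwarz andbT.
by have := cauchy_schwarz (- x) y; rewrite -scaleN1r ipZl normrZ normrN1; lra.
Qed.

Lemma continuous_ipl z : continuous (ip^~ z).
Proof.
move=> x; apply/cvgrPdist_le => e e0.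
have ez0 : 0 < e / (`|z| + 1) by rewrite divr_gt0 // ltr_wpDl.
near=> y.
have xy_small : `|x - y| <= e / (`|z| + 1).
  by near: y; apply: cvgr_dist_le => //; exact: cvg_id.
rewrite -ipBl (le_trans (normr_ip_le _ _)) //.
have : `|x - y| * (`|z| + 1) <= e by rewrite -ler_pdivlMr // ltr_wpDl.
have := normr_ge0 z; have := normr_ge0 (x - y); nra.
Unshelve. all: by end_near.
Qed.

End InnerProduct.

Section ColumnVectors.
Variables (R : realType) (d : nat).
Implicit Types p : 'cV[R]_d.

Lemma norm2_ge0 p : 0 <= norm2 p.
Proof. exact: sqrtr_ge0. Qed.

Lemma norm2Z a p : norm2 (a *: p) = `|a| * norm2 p.
Proof.
rewrite /norm2; under eq_bigr do rewrite mxE exprMn.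
by rewrite -mulr_sumr sqrtrM ?sqr_ge0 // sqrtr_sqr.
Qed.

Lemma ler_entry_norm2 p i : `|p i 0| <= norm2 p.
Proof.
rewrite /norm2 -sqrtr_sqr ler_sqrt; last by apply: sumr_ge0 => j _; exact: sqr_ge0.
by rewrite (bigD1 i) //= lerDl; apply: sumr_ge0 => j _; exact: sqr_ge0.
Qed.

Lemma normr_le_norm2 p : `|p| <= norm2 p.
Proof.
rewrite [`|p|]mx_normrE; apply: bigmax_le => [|[i j] _]; first exact: norm2_ge0.
by rewrite (ord1 j); exact: ler_entry_norm2.
Qed.

Lemma cV_ebasis_expand p : p = \sum_i p i 0 *: ebasis i.
Proof. by rewrite {1}[p]matrix_sum_delta; under eq_bigr do rewrite big_ord1. Qed.

Lemma linear_ebasis_expand (W : lmodType R) (f : {linear 'cV[R]_d -> W}) p :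
  f p = \sum_i p i 0 *: f (ebasis i).
Proof.
by rewrite {1}[p]cV_ebasis_expand linear_sum; under eq_bigr do rewrite linearZ.
Qed.
End ColumnVectors.

Section PathDerivatives.
Variable R : realType.

Lemma is_derive_linear_comp (U W : normedModType R) (L : {linear U -> W})
    (f : R -> U) (t : R) (df : U) :
  continuous L -> is_derive t 1 f df -> is_derive t 1 (L \o f) (L df).
Proof.
move=> cL fdf.
have f_diff : differentiable f t by apply/derivable1_diffP; exact: ex_derive.
have L_diff : differentiable L (f t) by exact: linear_differentiable.
have Lf_diff : differentiable (L \o f) t by exact: differentiable_comp.
apply: DeriveDef; first exact/derivable1_diffP.
by rewrite deriveE // diff_comp // diff_lin //= -deriveE // derive_val.
Qed.

Lemma is_derive_scalel (W : normedModType R) (k : R -> R) (w : W) (t dk : R) :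
  is_derive t 1 k dk -> is_derive t 1 (fun s => k s *: w) (dk *: w).
Proof.
have wlin : linear ( *:%R^~ w : R -> W) by move=> a u v; rewrite scalerDl scalerA.
pose L : {linear R -> W} := HB.pack ( *:%R^~ w) (GRing.isLinear.Build _ _ _ _ _ wlin).
exact: (is_derive_linear_comp (L := L) (@scalel_continuous _ _ w)).
Qed.

Lemma is_derive_line (U W : normedModType R) (f : U -> W) (x u : U) (t : R) :
  differentiable f (x + t *: u) ->
  is_derive t 1 (fun s => f (x + s *: u)) ('d f (x + t *: u) u).
Proof.
move=> f_diff.
have line_diff : differentiable (fun s : R => x + s *: u) t.
  by apply: differentiableD => //; exact: differentiableZl.
have comp_diff : differentiable (f \o (fun s : R => x + s *: u)) t.
  exact: differentiable_comp.
apply: DeriveDef; first exact/derivable1_diffP.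
rewrite deriveE // diff_comp //=; congr ('d f _ _).
by rewrite diffD // diff_cst diffZl //= add0r diff_val scale1r.
Qed.
End PathDerivatives.

Section MeanValue.
Variables (R : realType) (V : normedModType R) (ip : V -> V -> R).
Hypothesis hip : is_inner_product ip.

Lemma is_derive_ipl (f : R -> V) (t : R) (df z : V) :
  is_derive t 1 f df -> is_derive t 1 (fun s => ip (f s) z) (ip df z).
Proof.
have ipz_lin : linear (ip^~ z : V -> R) by move=> a x y; rewrite ipDZl.
pose L : {linear V -> R} := HB.pack (ip^~ z) (GRing.isLinear.Build _ _ _ _ _ ipz_lin).
have cL : continuous L by exact: continuous_ipl.
by move=> fdf; exact (is_derive_linear_comp cL fdf).
Qed.

(* Apply the scalar mean value theorem to [s |-> (f s, f 1 - f 0)]. *)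
Lemma mean_value_ineq (f f' : R -> V) (M : R) :
  (forall s : R, is_derive s 1 f (f' s)) ->
  (forall s, s \in `]0, 1[ -> `|f' s| <= M) -> `|f 1 - f 0| <= M.
Proof.
move=> f_der f'_le; set w := f 1 - f 0.
have phi_der (s : R) : is_derive s 1 (fun s => ip (f s) w) (ip (f' s) w).
  exact: is_derive_ipl.
have [c c01 mvt] := MVT ltr01 (fun s _ => phi_der s)
  (derivable_within_continuous (fun s _ => @ex_derive _ _ _ _ _ _ _ (phi_der s))).
have : `|w| ^+ 2 <= M * `|w|.
  rewrite -(ip_norm hip) {1}/w (ipBl hip) mvt subr0 mulr1.
  by rewrite (le_trans (cauchy_schwarz hip _ _)) // ler_wpM2r // f'_le.
have := le_trans (normr_ge0 _) (f'_le c c01); have := normr_ge0 w; nra.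
Qed.
End MeanValue.

Section SecondDerivative.
Variables (R : realType) (V : normedModType R) (d : nat) (D : 'cV[R]_d -> V).
Hypothesis hD : C2 D.

Lemma psiT_diff th c : psiT D th c = 'd D th c.
Proof. by rewrite [RHS]linear_ebasis_expand. Qed.

Lemma HD_suml th q r : HD D th q r = \sum_i q i 0 *: HD D th (ebasis i) r.
Proof.
rewrite [LHS]/HD.
have d_psi i x : differentiable (fun y => 'd D y (ebasis i)) x by case: hD => _ [].
have -> : (fun y => 'd D y q) = \sum_i (q i 0 \*: fun y => 'd D y (ebasis i)).
  by apply/funext => y; rewrite fct_sumE [LHS]linear_ebasis_expand.
rewrite -deriveE; last by apply: differentiable_sum => i; exact: differentiableZ.
rewrite derive_sum => [|i]; last by apply/diff_derivable/differentiableZ.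
by apply: eq_bigr => i _; rewrite deriveZ ?deriveE //; exact: diff_derivable.
Qed.

Lemma HDZl th a q r : HD D th (a *: q) r = a *: HD D th q r.
Proof.
rewrite HD_suml [in RHS]HD_suml scaler_sumr.
by apply: eq_bigr => i _; rewrite mxE scalerA.
Qed.

Lemma HDZ th a q : HD D th (a *: q) (a *: q) = (a * a) *: HD D th q q.
Proof. by rewrite HDZl [HD _ _ q _]linearZ scalerA. Qed.

Lemma norm_HD_le th q :
  `|HD D th q q| <= norm2 q ^+ 2 * \sum_i \sum_j `|HD D th (ebasis i) (ebasis j)|.
Proof.
rewrite HD_suml mulr_sumr (le_trans (ler_norm_sum _ _ _)) // ler_sum // => i _.
rewrite normrZ [HD _ _ _ q]linear_ebasis_expand.
apply: le_trans (ler_wpM2l (normr_ge0 _) (ler_norm_sum _ _ _)) _.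
rewrite !mulr_sumr ler_sum // => j _.
by rewrite normrZ mulrA ler_wpM2r // expr2 ler_pM ?ler_entry_norm2.
Qed.

Lemma norm_HD_le_kappa th q : `|HD D th q q| <= kappa_max D th * norm2 q ^+ 2.
Proof.
have [q0|q_neq0] := eqVneq (norm2 q) 0.
  by have := norm_HD_le th q; rewrite q0 expr0n mul0r mulr0.
have q_gt0 : 0 < norm2 q by rewrite lt_def q_neq0 norm2_ge0.
set u := (norm2 q)^-1 *: q.
have u1 : norm2 u = 1 by rewrite norm2Z ger0_norm ?invr_ge0 ?norm2_ge0 // mulVf.
have bounded : has_ubound [set `|HD D th v v| | v in [set v | norm2 v = 1]].
  exists (\sum_i \sum_j `|HD D th (ebasis i) (ebasis j)|) => _ [v /= v1 <-].
  by have := norm_HD_le th v; rewrite v1 expr1n mul1r.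
have u_le : `|HD D th u u| <= kappa_max D th by apply: (ub_le_sup bounded); exists u.
have -> : HD D th q q = norm2 q ^+ 2 *: HD D th u u.
  by rewrite expr2 -HDZ scalerA mulfV // scale1r.
have n2_ge0 : 0 <= norm2 q ^+ 2 by rewrite exprn_ge0 ?norm2_ge0.
by rewrite normrZ ger0_norm // mulrC ler_wpM2r.
Qed.
End SecondDerivative.

Section Taylor.
Variables (R : realType) (V : normedModType R) (ip : V -> V -> R).
Variables (d : nat) (D : 'cV[R]_d -> V).
Hypotheses (hip : is_inner_product ip) (hD : C2 D).

Lemma dD_segment_estimate th0 e : 0 < e ->
  exists2 del, 0 < del & forall u c, norm2 u < del -> 0 <= c <= 1 ->
  `|'d D (th0 + c *: u) u - 'd D th0 u - c *: HD D th0 u u| <= e * norm2 u ^+ 2.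
Proof.
move=> e0; set e' := e / (d%:R + 1).
have e'0 : 0 < e' by rewrite divr_gt0 // ltr_wpDl.
have psi_o i : \forall v \near (0 : 'cV[R]_d),
    `|psi D (v + th0) i - psi D th0 i - 'd (psi D ^~ i) th0 v| <= e' * `|v|.
  have /diff_locally/eqaddoP/(_ e' e'0) := proj1 (proj2 hD) (ebasis i) th0.
  by apply: filterS => v /=; rewrite -addrA -opprD.
have [del del0 psi_le] := nbhs_norm0P.1 (filter_forall _ psi_o).
exists del => // u c u_small /andP[c0 c1].
have cu_le : `|c *: u| <= norm2 u.
  by rewrite normrZ ger0_norm // (le_trans _ (normr_le_norm2 u)) // ler_piMl.
have cu_small : `|c *: u| < del := le_lt_trans cu_le u_small.
have -> : 'd D (th0 + c *: u) u - 'd D th0 u - c *: HD D th0 u u =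
    \sum_i u i 0 *: (psi D (c *: u + th0) i - psi D th0 i - 'd (psi D ^~ i) th0 (c *: u)).
  rewrite [X in X - _ - _]linear_ebasis_expand [X in _ - X - _]linear_ebasis_expand.
  rewrite HD_suml // scaler_sumr -!sumrB; apply: eq_bigr => i _.
  rewrite [c *: u + th0]addrC [in RHS]linearZ /=.
  by rewrite !scalerBr !scalerA (mulrC c).
apply: le_trans (ler_norm_sum _ _ _) _.
apply: le_trans (_ : \sum_(i < d) norm2 u * (e' * norm2 u) <= _).
  apply: ler_sum => i _; rewrite normrZ ler_pM ?ler_entry_norm2 //.
  apply: le_trans (psi_le _ cu_small i) _.
  by rewrite ler_pM2l.
have de : d%:R * e' <= e.
  by rewrite /e' mulrCA ger_pMr // ler_pdivrMr ?mul1r ?ltr_wpDl // lerDl.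
rewrite sumr_const card_ord -mulr_natl; have := norm2_ge0 u; nra.
Qed.

Lemma taylor2 th0 e : 0 < e ->
  exists2 del, 0 < del & forall u, norm2 u < del ->
  `|D (th0 + u) - D th0 - 'd D th0 u - 2^-1 *: HD D th0 u u| <= e * norm2 u ^+ 2.
Proof.
move=> e0; have [del del0 dD_le] := dD_segment_estimate th0 e0.
exists del => // u u_small.
pose k : R -> R := 2^-1 \*: (id ^+ 2).
have k_der (s : R) : is_derive s 1 k s.
  apply: is_derive_eq.
  by rewrite expr1 scalerA [_%:A]mulr1 mulrA mulVf ?mul1r // pnatr_eq0.
(* [g 1 - g 0] is the remainder, and [g'] is bounded on [0, 1] by [dD_le]. *)
pose g s := D (th0 + s *: u) - s *: 'd D th0 u - k s *: HD D th0 u u.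
have g_der (s : R) : is_derive s 1 g
    ('d D (th0 + s *: u) u - 'd D th0 u - s *: HD D th0 u u).
  apply: is_deriveB; last exact: is_derive_scalel.
  apply: is_deriveB; first by apply: is_derive_line; case: hD.
  by apply: is_derive_eq (is_derive_scalel _ (is_derive_id s 1)) _; rewrite scale1r.
have in_segment (s : R) : s \in `]0, 1[ -> 0 <= s <= 1.
  by rewrite in_itv /= => /andP[/ltW -> /ltW ->].
have := mean_value_ineq hip g_der (fun s s01 => dD_le u s u_small (in_segment s s01)).
rewrite /g /k exprfctE /= expr1n expr0n !scale0r !scale1r addr0 !subr0.
rewrite [2^-1 *: 1]mulr1 [2^-1 *: 0]mulr0 scale0r subr0.
by rewrite addrAC (addrAC (D (th0 + u))).
Qed.
End Taylor.

Definition lincomb (R : realType) (V : normedModType R) n (v : 'I_n -> V)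
    (c : 'cV[R]_n) : V :=
  \sum_i c i 0 *: v i.

Definition gram (R : realType) (V : normedModType R) (ip : V -> V -> R) n
    (v : 'I_n -> V) : 'M[R]_n :=
  \matrix_(i, j) ip (v i) (v j).

Definition ipcol (R : realType) (V : normedModType R) (ip : V -> V -> R) n
    (v : 'I_n -> V) (y : V) : 'cV[R]_n :=
  \col_i ip (v i) y.

Lemma mpinvP (R : realType) m n (A : 'M[R]_(m, n)) :
  is_MP_inverse A (mpinv A) \/ mpinv A = 0.
Proof.
have [[X AX]|noMP] := pselect (exists X, is_MP_inverse A X).
  by left; exact: (xgetPex 0 (ex_intro _ X AX)).
by right; apply: xgetPN => X AX; apply: noMP; exists X.
Qed.

Section GramProjection.
Variables (R : realType) (V : normedModType R) (ip : V -> V -> R).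
Hypothesis hip : is_inner_product ip.
Variables (n : nat) (v : 'I_n -> V).
Local Notation G := (gram ip v).

Lemma lincombB c c' : lincomb v (c - c') = lincomb v c - lincomb v c'.
Proof. by rewrite /lincomb -sumrB; apply: eq_bigr => i _; rewrite !mxE scalerBl. Qed.

Lemma lincombZ a c : lincomb v (a *: c) = a *: lincomb v c.
Proof. by rewrite /lincomb scaler_sumr; apply: eq_bigr => i _; rewrite mxE scalerA. Qed.

Lemma ip_lincombl c y : ip (lincomb v c) y = \sum_i c i 0 * ip (v i) y.
Proof. exact: ip_suml. Qed.

Lemma gram_mulmx c i : (G *m c) i 0 = ip (v i) (lincomb v c).
Proof.
rewrite mxE /lincomb (ip_sumr hip); apply: eq_bigr => j _.
by rewrite mxE mulrC.
Qed.

Lemma gram_tr : G^T = G.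
Proof. by apply/matrixP => i j; rewrite !mxE (ip_sym hip). Qed.

Lemma lincomb_eq0 c : G *m c = 0 -> lincomb v c = 0.
Proof.
move=> Gc0; apply/normr0_eq0/eqP; rewrite -sqrf_eq0 -(ip_norm hip).
rewrite ip_lincombl; apply/eqP/big1 => i _.
by rewrite -gram_mulmx Gc0 mxE mulr0.
Qed.

(* [ipcol y] lies in the range of [G]: it is orthogonal to [ker G], which
   contains every row of [G X - 1] since [(G X - 1) G = 0]. *)
Lemma gram_ginv_ipcol X y : G *m X *m G = G -> G *m (X *m ipcol ip v y) = ipcol ip v y.
Proof.
move=> GXG; apply/eqP; rewrite -subr_eq0 mulmxA -[X in _ - X]mul1mx -mulmxBl.
set M := G *m X - 1%:M.
have MG : M *m G = 0 by rewrite mulmxBl mul1mx GXG subrr.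
apply/eqP/matrixP => i k; rewrite (ord1 k) !mxE.
have row_ker : lincomb v (row i M)^T = 0.
  apply: lincomb_eq0; rewrite -gram_tr -trmx_mul -row_mul MG.
  by apply/matrixP => j l; rewrite !mxE.
transitivity (ip (lincomb v (row i M)^T) y); last by rewrite row_ker ip0l.
rewrite ip_lincombl; apply: eq_bigr => j _.
by rewrite !mxE.
Qed.

Lemma norm_lincomb_ginv_le X y : G *m X *m G = G ->
  `|lincomb v (X *m ipcol ip v y)| <= `|y|.
Proof.
move=> GXG; set c := X *m ipcol ip v y.
have proj : ip (lincomb v c) (lincomb v c) = ip (lincomb v c) y.
  rewrite !ip_lincombl; apply: eq_bigr => i _.
  by rewrite -gram_mulmx gram_ginv_ipcol // [ipcol _ _ _ _ _]mxE.
have := cauchy_schwarz hip (lincomb v c) y.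
rewrite -proj (ip_norm hip).
have := normr_ge0 (lincomb v c); have := normr_ge0 y; nra.
Qed.

Lemma norm_lincomb_mpinv_le y : `|lincomb v (mpinv G *m ipcol ip v y)| <= `|y|.
Proof.
have [[GXG _ _ _]|->] := mpinvP G; first exact: norm_lincomb_ginv_le.
by rewrite mul0mx /lincomb big1 ?normr0 // => i _; rewrite mxE scale0r.
Qed.
End GramProjection.

Section Momentum.
Variables (R : realType) (V : normedModType R) (ip : V -> V -> R).
Variables (d : nat) (D : 'cV[R]_d -> V).
Hypotheses (hip : is_inner_product ip) (hD : C2 D).

Lemma difference_quotient_estimate th0 e : 0 < e ->
  exists2 del, 0 < del & forall h p, 0 < h -> h * norm2 p < del ->
  `|h^-1 *: (D (th0 + h *: p) - D th0) - 'd D th0 p|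
    <= h / 2 * kappa_max D th0 * norm2 p ^+ 2 + e * (h * norm2 p ^+ 2).
Proof.
move=> e0; have [del del0 taylor] := taylor2 hip hD th0 e0.
exists del => // h p h0 hp; set u := h *: p.
have norm_u : norm2 u = h * norm2 p by rewrite norm2Z gtr0_norm.
set W := D (th0 + u) - D th0 - 'd D th0 u - 2^-1 *: HD D th0 u u.
have -> : h^-1 *: (D (th0 + u) - D th0) - 'd D th0 p =
    h^-1 *: W + (h / 2) *: HD D th0 p p.
  have h_neq0 : h != 0 by rewrite gt_eqF.
  have hh : h^-1 / 2 * (h * h) = h / 2 by field.
  by rewrite /W /u linearZ HDZ // !scalerBr !scalerA mulVr ?unitfE // hh scale1r subrK.
have W_le : h^-1 * `|W| <= e * (h * norm2 p ^+ 2).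
  rewrite ler_pdivrMl //.
  have -> : h * (e * (h * norm2 p ^+ 2)) = e * norm2 u ^+ 2 by rewrite norm_u; ring.
  by apply: taylor; rewrite norm_u.
have HD_le := norm_HD_le_kappa hD th0 p.
apply: le_trans (ler_normD _ _) _.
have h2_gt0 : 0 < h / 2 by rewrite divr_gt0.
rewrite (normrZ h^-1) (normrZ (h / 2)) !gtr0_norm ?invr_gt0 //.
have := ler_wpM2l (ltW h2_gt0) HD_le; lra.
Qed.

Lemma crossGramX_mulmx th th' c :
  crossGramX ip D th th' *m c = ipcol ip (psi D th) ('d D th' c).
Proof.
apply/matrixP => i k; rewrite (ord1 k) !mxE -psiT_diff /psiT (ip_sumr hip).
by apply: eq_bigr => j _; rewrite mxE mulrC.
Qed.

Lemma momentum_gap th0 th1 h b (q p : 'cV[R]_d) :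
  let X := mpinv (GramX ip D th1) in
  psiT D th1 ((b / h) *: (X *m ipcol ip (psi D th1) (D th1 - D th0)) - q)
    - psiT D th1 (b *: (X *m crossGramX ip D th1 th0 *m p) - q)
  = b *: psiT D th1
      (X *m ipcol ip (psi D th1) (h^-1 *: (D th1 - D th0) - 'd D th0 p)).
Proof.
move=> X; rewrite -(lincombB (psi D th1)) -(lincombZ (psi D th1)); congr lincomb.
rewrite opprB addrA subrK -scalerA -scalerBr -mulmxA crossGramX_mulmx.
rewrite scalemxAr -mulmxBr; congr (_ *: (_ *m _)).
by apply/matrixP => i k; rewrite !mxE !(ipBr hip) (ipZr hip) (ipBr hip).
Qed.
End Momentum.

Unset Implicit Arguments.
Theorem mainTheorem4 (R : realType) (V : normedModType R) (d : nat)
  (ip : V -> V -> R) (D : 'cV[R]_d -> V)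
  (Gk : 'cV[R]_d -> 'M[R]_d) (gradL : 'cV[R]_d -> 'cV[R]_d)
  (th0 : 'cV[R]_d) (hk betak : R) :
  is_inner_product ip -> C2 D ->
  (forall th, symPSD (Gk th)) ->
  0 < hk -> 0 <= betak ->
  forall eps : R, 0 < eps -> exists delta : R, 0 < delta /\
  forall (h : R) (p : 'cV[R]_d), 0 < h -> h * norm2 p < delta ->
  let th1 := th0 + h *: p in
  let z := \col_(i < d) ip (psi D th1 i) (D th1 - D th0) in
  let pk := betak *: (mpinv (GramX ip D th1) *m crossGramX ip D th1 th0 *m p)
            - hk *: (mpinv (Gk th1) *m gradL th1) in
  let phat := (betak / h) *: (mpinv (GramX ip D th1) *m z)
            - hk *: (mpinv (Gk th1) *m gradL th1) in
  `|psiT D th1 phat - psiT D th1 pk|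
    <= h / 2 * betak * kappa_max D th0 * norm2 p ^+ 2
       + eps * (h * norm2 p ^+ 2).
Proof.
move=> hip hD _ _ betak_ge0 eps eps_gt0.
set e := eps / (betak + 1).
have e_gt0 : 0 < e by rewrite divr_gt0 // ltr_wpDl.
have betak_e : betak * e <= eps.
  by rewrite /e mulrCA ger_pMr // ler_pdivrMr ?mul1r ?ltr_wpDl // lerDl.
have [del del_gt0 quotient_le] := difference_quotient_estimate hip hD th0 e_gt0.
exists del; split => // h p h_gt0 hp /=.
rewrite momentum_gap // normrZ ger0_norm //.
apply: le_trans (ler_wpM2l betak_ge0
  (le_trans (norm_lincomb_mpinv_le hip _ _) (quotient_le h p h_gt0 hp))) _.
have -> : betak * (h / 2 * kappa_max D th0 * norm2 p ^+ 2 + e * (h * norm2 p ^+ 2))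
    = h / 2 * betak * kappa_max D th0 * norm2 p ^+ 2 + betak * e * (h * norm2 p ^+ 2).
  by ring.
rewrite lerD2l; apply: ler_wpM2r betak_e.
by rewrite mulr_ge0 ?exprn_ge0 ?norm2_ge0 ?ltW.
Qed.
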